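(* Let $(p_D)_{D\in\mathcal{I}}$ be a probability distribution on $\mathcal{I}$ and for $\mathbf{Q}\in B(\mathcal{L})$ define $$p^M(\mathbf{Q})=-\log\left(\max_{D\in\mathcal{I}}p_D\right)+\log\left(\sum_{E}\max_{D:\mathbf{Q}(D)=E}p_D\right),$$ where $E$ ranges over $\{\mathbf{Q}(D):D\in\mathcal{I}\}$. Then $p^M$ has no information arbitrage: whenever $\mathbf{Q}_2\twoheadrightarrow\mathbf{Q}_1$, we have $p^M(\mathbf{Q}_2)\ge p^M(\mathbf{Q}_1)$.
   Context: $\mathcal{I}$ is a countable nonempty set of database instances; queries are deterministic functions on $\mathcal{I}$; a query bundle is a finite tuple of queries from a language $\mathcal{L}$, evaluated componentwise; $B(\mathcal{L})$ is the set of bundles. $\mathbf{Q}_2\twoheadrightarrow\mathbf{Q}_1$ means: for all $D',D''\in\mathcal{I}$, $\mathbf{Q}_2(D')=\mathbf{Q}_2(D'')$ implies $\mathbf{Q}_1(D')=\mathbf{Q}_1(D'')$. ($p^M$ equals $H_\infty(X)-H_\infty(X\mid\mathbf{Q}(X))$ for min-entropy $H_\infty$ and $X$ distributed according to $p_D$.) *)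

From HB Require Import structures.
From mathcomp Require Import all_boot all_order all_algebra.
From mathcomp Require Import all_classical all_reals all_analysis.
Set Implicit Arguments. Unset Strict Implicit. Unset Printing Implicit Defensive.
Import Order.TTheory GRing.Theory Num.Theory.
Local Open Scope classical_set_scope.
Local Open Scope ring_scope.

(* Database instances: a countable nonempty type I (countType). *)
Definition query (I : Type) (Out : Type) := I -> Out.

Definition bundle_in (I Out : Type) (L : set (I -> Out)) (Q : seq (I -> Out)) : Prop :=
  foldr (fun q P => L q /\ P) True Q.

Definition evalB (I Out : Type) (Q : seq (I -> Out)) (D : I) : seq Out :=
  map (fun q => q D) Q.

Definition determines (I Out : Type) (Q2 Q1 : seq (I -> Out)) : Prop :=
  forall D' D'' : I, evalB Q2 D' = evalB Q2 D'' -> evalB Q1 D' = evalB Q1 D''.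

Definition is_distribution (R : realType) (I : countType) (p : I -> R) : Prop :=
  (forall D, 0 <= p D) /\ (\esum_(D in [set: I]) (p D)%:E = 1)%E.

(* max_D p_D (the supremum, which is attained for a distribution) *)
Definition pmax (R : realType) (I : countType) (p : I -> R) : \bar R :=
  ereal_sup (range (fun D => (p D)%:E)).

Definition fibermax (R : realType) (I : countType) (Out : choiceType)
  (p : I -> R) (Q : seq (I -> Out)) (E : seq Out) : \bar R :=
  ereal_sup [set (p D)%:E | D in [set D | evalB Q D = E]].

Definition pM (R : realType) (I : countType) (Out : choiceType)
  (p : I -> R) (Q : seq (I -> Out)) : R :=
  - ln (fine (pmax p)) +
    ln (fine (\esum_(E in range (evalB Q)) fibermax p Q E)).

From HB Require Import structures.
From mathcomp Require Import all_boot all_order all_algebra.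
From mathcomp Require Import all_classical all_reals all_analysis.
Import Order.TTheory GRing.Theory Num.Theory.
Local Open Scope classical_set_scope.
Local Open Scope ring_scope.

(* Grouping the total mass by the fibers of Q and bounding each fiber's mass
   from below by its maximum shows that the sum of fiber maxima is at most 1
   (and at least the largest single mass, so positive).  If Q2 determines Q1,
   every Q1-fiber is a union of Q2-fibers, so its maximum is at most the sum of
   the maxima of those Q2-fibers: the sum of fiber maxima can only grow when
   the fibers get finer.  Since ln is monotone, p^M grows too. *)

Lemma esum_ge_term {R : realType} {T : choiceType} (S : set T)
    (a : T -> \bar R) (x : T) :
  S x -> (a x <= \esum_(y in S) a y)%E.
Proof.
move=> Sx; apply: esum_ge; exists [set x]; last by rewrite fsbig_set1.
by split; [exact: finite_set1 | move=> y ->].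
Qed.

Lemma esum_fibers {R : realType} {T B : choiceType} (S : set T) (h : T -> B)
    (a : T -> \bar R) :
  (forall x, S x -> (0 <= a x)%E) ->
  \esum_(x in S) a x =
  \esum_(b in h @` S) \esum_(x in [set x | S x /\ h x = b]) a x.
Proof.
move=> a_ge0; rewrite (esum_esum (a := fun _ x => a x)); last first.
  by move=> b x _ [/a_ge0].
rewrite (reindex_esum S _ (fun x => (h x, x)) (fun k => a k.2)) //; split.
- by move=> x Sx; split => //=; exists x.
- by move=> x y _ _ [].
- by move=> [b x] /= [_ [Sx <-]]; exists x.
Qed.

Lemma factor_through {T : choiceType} {B1 B2 : Type} (x0 : T)
    {f1 : T -> B1} {f2 : T -> B2} :
  (forall x y, f2 x = f2 y -> f1 x = f1 y) -> exists g, f1 = g \o f2.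
Proof.
move=> f2f1; exists (fun b => f1 (xget x0 [set x | f2 x = b])).
apply/funext => x /=; apply/esym/f2f1.
by apply: (@xgetPex _ x0 [set y | f2 y = f2 x]); exists x.
Qed.

Definition fiber_sup {R : realType} {T B : Type} (p : T -> R) (f : T -> B)
    (b : B) : \bar R :=
  ereal_sup [set (p x)%:E | x in [set x | f x = b]].

Definition sum_fiber_sup {R : realType} {T B : choiceType} (p : T -> R)
    (f : T -> B) : \bar R :=
  \esum_(b in range f) fiber_sup p f b.

Section FiberSup.
Context {R : realType} {T : choiceType} {p : T -> R}.
Hypothesis p_ge0 : forall x, 0 <= p x.

Lemma fiber_sup_ge {B : Type} (f : T -> B) (x : T) :
  ((p x)%:E <= fiber_sup p f (f x))%E.
Proof. by apply: ereal_sup_ubound; exists x. Qed.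

Lemma fiber_sup_ge0 {B : Type} (f : T -> B) (b : B) :
  range f b -> (0 <= fiber_sup p f b)%E.
Proof. by move=> [x _ <-]; rewrite (le_trans _ (fiber_sup_ge f x)) ?lee_fin. Qed.

Lemma sum_fiber_sup_ge {B : choiceType} (f : T -> B) (x : T) :
  ((p x)%:E <= sum_fiber_sup p f)%E.
Proof.
apply: le_trans (fiber_sup_ge f x) _.
by apply: esum_ge_term; exists x.
Qed.

Lemma sum_fiber_sup_le_esum {B : choiceType} (f : T -> B) :
  (sum_fiber_sup p f <= \esum_(x in [set: T]) (p x)%:E)%E.
Proof.
rewrite (esum_fibers _ f); last by move=> x _; rewrite lee_fin.
apply: le_esum => b _; apply: ge_ereal_sup => _ [x fxb <-].
exact: esum_ge_term.
Qed.

Lemma sum_fiber_sup_comp_le {B C : choiceType} (g : B -> C) (f : T -> B) :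
  (sum_fiber_sup p (g \o f) <= sum_fiber_sup p f)%E.
Proof.
have image_range : g @` range f = range (g \o f).
  apply/seteqP; split => [_ [_ [x _ <-] <-]|_ [x _ <-]]; first by exists x.
  by exists (f x); [exists x|].
rewrite [sum_fiber_sup p f](esum_fibers _ g); last exact: fiber_sup_ge0.
rewrite image_range; apply: le_esum => c _; apply: ge_ereal_sup => _ [x gfx <-].
apply: le_trans (fiber_sup_ge f x) _.
by apply: esum_ge_term; split; first exists x.
Qed.

End FiberSup.

Lemma distribution_has_positive_mass {R : realType} {I : countType}
    {p : I -> R} :
  is_distribution p -> exists x, 0 < p x.
Proof.
move=> [p_ge0 p_sum1]; apply/not_existsP => no_pos.
suff : (\esum_(x in [set: I]) (p x)%:E = 0)%E.
  by rewrite p_sum1 => /eqP; rewrite onee_eq0.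
apply: esum1 => x _; congr (_%:E); apply/eqP.
by rewrite eq_le p_ge0 andbT leNgt; apply/negP; exact: no_pos.
Qed.

Lemma ler_ln_fine {R : realType} (x y : \bar R) :
  (0 < x)%E -> (x <= y)%E -> (y < +oo)%E -> ln (fine x) <= ln (fine y).
Proof.
move=> x_gt0 le_xy y_fin.
have x_fin : (x < +oo)%E by exact: le_lt_trans le_xy y_fin.
have y_gt0 : (0 < y)%E by exact: lt_le_trans le_xy.
rewrite ler_ln ?posrE ?fine_gt0 ?x_gt0 ?y_gt0 //.
apply: fine_le => //; rewrite ge0_fin_numE ?ltW //.
Qed.

Theorem lemma20 (R : realType) (I : countType) (Out : choiceType)
  (L : set (I -> Out)) (p : I -> R) (D0 : I) :
  is_distribution p ->
  forall Q1 Q2 : seq (I -> Out),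
    bundle_in L Q1 -> bundle_in L Q2 ->
    determines Q2 Q1 ->
    pM p Q1 <= pM p Q2.
Proof.
move=> p_distr Q1 Q2 _ _ Q2Q1; have [p_ge0 p_sum1] := p_distr.
have pME (Q : seq (I -> Out)) :
  pM p Q = - ln (fine (pmax p)) + ln (fine (sum_fiber_sup p (evalB Q))) by [].
rewrite !pME lerD2l; have [g ->] := factor_through D0 Q2Q1.
have [x px_gt0] := distribution_has_positive_mass p_distr.
apply: ler_ln_fine.
- by apply: lt_le_trans (sum_fiber_sup_ge _ x); rewrite lte_fin.
- exact: (sum_fiber_sup_comp_le p_ge0).
- by rewrite (le_lt_trans (sum_fiber_sup_le_esum p_ge0 _)) // p_sum1 ltry.
Qed.
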